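(* Let $F_3=|0\rangle\langle0|\otimes I_2\otimes I_2+|1\rangle\langle1|\otimes\mathrm{SWAP}$ be the Fredkin gate and $U_5=(T_{AB}\otimes I_2)F_3=|0\rangle\langle0|\otimes I_2\otimes I_2+|1\rangle\langle1|\otimes(\sigma_1\otimes I_2)\,\mathrm{SWAP}$. Then $\mathrm{sr}(U_5)=5$.
   Context: $I_2$ is the $2\times 2$ identity, $\sigma_1=\begin{bmatrix}0&1\\1&0\end{bmatrix}$, $\{|0\rangle,|1\rangle\}$ is the standard basis of $\mathbb{C}^2$, and $\mathrm{SWAP}|b,c\rangle=|c,b\rangle$ on $\mathbb{C}^2\otimes\mathbb{C}^2$. $T=|0\rangle\langle0|\otimes I_2+|1\rangle\langle1|\otimes\sigma_1$ is the CNOT gate; $T_{AB}$ denotes $T$ with control qubit $A$ and target $B$. For a matrix $U$ on $\mathbb{C}^2\otimes\mathbb{C}^2\otimes\mathbb{C}^2$ (systems $A,B,C$), its Schmidt rank $\mathrm{sr}(U)$ is the least integer $r$ such that $U=\sum_{j=1}^r A_j\otimes B_j\otimes C_j$ with $A_j,B_j,C_j$ complex $2\times 2$ matrices (i.e. the tensor rank of $U$). *)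

(* Complex numbers are modelled as R[i] (mathcomp-real-closed
   `complex`) for an arbitrary R : realType; every realType is (isomorphic to)
   the real numbers, so R[i] is the field of complex numbers. *)
From HB Require Import structures.
From mathcomp Require Import all_boot all_order all_algebra.
From mathcomp Require Import reals.
From mathcomp Require Export complex mxtens.

Set Implicit Arguments.
Unset Strict Implicit.
Unset Printing Implicit Defensive.

Import GRing.Theory.
Local Open Scope ring_scope.

Section Qubits.
Variable R : realType.
Local Notation C := (R[i]).

(* Kronecker products use mxtens.tensmx ( *t ): index (i,j) |-> i*n+j,
   i.e. the standard convention with the left factor most significant. *)

Definition ket0bra0 : 'M[C]_2 := \matrix_(i, j) ((i == 0 :> nat) && (j == 0 :> nat))%:R.
Definition ket1bra1 : 'M[C]_2 := \matrix_(i, j) ((i == 1 :> nat) && (j == 1 :> nat))%:R.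
Definition sigma1 : 'M[C]_2 := \matrix_(i, j) (i != j :> nat)%:R.
Definition I2 : 'M[C]_2 := 1%:M.

Definition SWAP : 'M[C]_(2 * 2) :=
  \matrix_(k, l) (let: (b', c') := mxtens_unindex k in
                  let: (b, c) := mxtens_unindex l in
                  ((b' == c) && (c' == b))%:R).

Definition CNOT : 'M[C]_(2 * 2) := ket0bra0 *t I2 + ket1bra1 *t sigma1.

Definition Fredkin : 'M[C]_(2 * (2 * 2)) := ket0bra0 *t (I2 *t I2) + ket1bra1 *t SWAP.

Definition U5 : 'M[C]_(2 * (2 * 2)) :=
  castmx (esym (mulnA 2 2 2), esym (mulnA 2 2 2)) (CNOT *t I2) *m Fredkin.

Definition has_sr_decomp (U : 'M[C]_(2 * (2 * 2))) (r : nat) : Prop :=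
  exists (A B D : 'I_r -> 'M[C]_2), U = \sum_(j < r) (A j *t (B j *t D j)).

Definition schmidt_rank_is (U : 'M[C]_(2 * (2 * 2))) (r : nat) : Prop :=
  has_sr_decomp U r /\ forall r', has_sr_decomp U r' -> (r <= r')%N.

End Qubits.

(* Both control blocks of U5 are explicit: with the control
   qubit A in |0><0| the gate acts as I (x) I, and in |1><1| it acts as
   M := (sigma_1 (x) I) SWAP, a permutation matrix which is a sum of four
   products of matrix units.  This gives a decomposition with 1 + 4 terms.

   Fix a diagonal entry a of system A and realign the
   corresponding block of U into the (B B', C C') matrix "slice a U".  A
   decomposition U = sum_{j<r} A_j (x) B_j (x) C_j realigns to
   slice a U = P diag(A_j(a,a)) Q^T, where the columns of P and Q are the
   vectorised B_j and C_j.  If slice 1 U = K1 is invertible and the nonzero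
   K0 = slice 0 U satisfies K0 K1^-1 K0 = 0, then r > 4: for r <= 4, P and Q
   are invertible 4 x 4 matrices and the nilpotency condition becomes one for
   diagonal matrices, which forces K0 = 0.  For U5, K1 is the permutation
   matrix M itself and K0 = vec(I) vec(I)^T. *)
From mathcomp Require Import all_boot all_order all_algebra.
From mathcomp Require Import reals complex mxtens.
Import GRing.Theory.
Local Open Scope ring_scope.

Section TensorAlgebra.
Variable K : comPzRingType.

Lemma tensmxDl m n p q (A B : 'M[K]_(m, n)) (D : 'M[K]_(p, q)) :
  (A + B) *t D = A *t D + B *t D.
Proof. by apply/matrixP => i j; rewrite !mxE mulrDl. Qed.

Lemma tensmxDr m n p q (A : 'M[K]_(m, n)) (B D : 'M[K]_(p, q)) :
  A *t (B + D) = A *t B + A *t D.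
Proof. by apply/matrixP => i j; rewrite !mxE mulrDr. Qed.

Lemma castmxD m n m' n' (e : (m = m') * (n = n')) (A B : 'M[K]_(m, n)) :
  castmx e (A + B) = castmx e A + castmx e B.
Proof. by case: e => em en; case: m' / em; case: n' / en. Qed.

Lemma tensmxA m n p q r s (A : 'M[K]_(m, n)) (B : 'M[K]_(p, q)) (D : 'M[K]_(r, s)) :
  castmx (esym (mulnA m p r), esym (mulnA n q s)) ((A *t B) *t D) = A *t (B *t D).
Proof.
apply/matrixP => i j.
case: (mxtens_indexP i) => i1 i23; case: (mxtens_indexP i23) => i2 i3.
case: (mxtens_indexP j) => j1 j23; case: (mxtens_indexP j23) => j2 j3.
have reassoc a b c (x : 'I_a) (y : 'I_b) (z : 'I_c) :
    cast_ord (esym (esym (mulnA a b c))) (mxtens_index (x, mxtens_index (y, z)))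
    = mxtens_index (mxtens_index (x, y), z).
  by apply: val_inj; rewrite /= mulnDl addnA mulnA.
by rewrite castmxE !reassoc !tensmxE mulrA.
Qed.

Lemma controlled_mul m n (p0 p1 : 'M[K]_m) (X0 X1 Y0 Y1 : 'M[K]_n) :
  p0 *m p0 = p0 -> p1 *m p1 = p1 -> p0 *m p1 = 0 -> p1 *m p0 = 0 ->
  (p0 *t X0 + p1 *t X1) *m (p0 *t Y0 + p1 *t Y1) = p0 *t (X0 *m Y0) + p1 *t (X1 *m Y1).
Proof.
move=> p00 p11 p01 p10.
by rewrite mulmxDl !mulmxDr !tensmx_mul p00 p11 p01 p10 !tens0mx addr0 add0r.
Qed.

Variables m n p : nat.

(* The realigned a-th diagonal block of M on A (x) B (x) C: the entry at
   ((b', b), (c', c)) is <a b' c'| M |a b c>. *)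
Definition slice (a : 'I_m) (M : 'M[K]_(m * (n * p))) : 'M[K]_(n * n, p * p) :=
  \matrix_(k, l)
    M (mxtens_index (a, mxtens_index ((mxtens_unindex k).1, (mxtens_unindex l).1)))
      (mxtens_index (a, mxtens_index ((mxtens_unindex k).2, (mxtens_unindex l).2))).

Definition vecs {d r : nat} (B : 'I_r -> 'M[K]_d) : 'M[K]_(d * d, r) :=
  \matrix_(k, j) B j (mxtens_unindex k).1 (mxtens_unindex k).2.

Lemma slice_sum r (A : 'I_r -> 'M[K]_m) (B : 'I_r -> 'M[K]_n) (D : 'I_r -> 'M[K]_p) a :
  slice a (\sum_(j < r) A j *t (B j *t D j))
  = vecs B *m diag_mx (\row_j A j a a) *m (vecs D)^T.
Proof.
apply/matrixP => k l; rewrite mul_mx_diag !mxE summxE; apply: eq_bigr => j _.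
by rewrite !tensmxE !mxE mulrA [_ * A j a a]mulrC -!mulrA.
Qed.

End TensorAlgebra.

Arguments slice {K m n p}.

Section Pencil.
Variable F : fieldType.

(* If diag(a) X = 1 then every diagonal entry of X is nonzero, so
   diag(b) X diag(b) = 0 forces b = 0. *)
Lemma diag_pencil_nil n (a b : 'rV[F]_n) (X : 'M[F]_n) :
  diag_mx a *m X = 1%:M -> diag_mx b *m X *m diag_mx b = 0 -> b = 0.
Proof.
move=> aX1 bXb0; apply/rowP => j; rewrite mxE.
have /(congr1 (fun M : 'M[F]_n => M j j)) := aX1.
rewrite mul_diag_mx !mxE eqxx /= => ajXjj.
have /(congr1 (fun M : 'M[F]_n => M j j)) := bXb0.
rewrite mul_mx_diag mul_diag_mx !mxE => /eqP.
have Xjj_nz : X j j != 0 by apply: contra_eq_neq ajXjj => ->; rewrite mulr0 eq_sym oner_neq0.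
by rewrite !mulf_eq0 (negPf Xjj_nz) orbF orbb => /eqP.
Qed.

(* A pencil K1, K0 of matrices of rank <= r sharing the factors P, Q, with K1
   invertible and K0 K1^-1 K0 = 0, has K0 = 0 unless r exceeds n: for r <= n
   the factors are invertible and the question reduces to diag_pencil_nil. *)
Lemma pencil_rank_bound n r (P Q : 'M[F]_(n, r)) (a b : 'rV[F]_r) (Y : 'M[F]_n) :
  let K1 := P *m diag_mx a *m Q^T in let K0 := P *m diag_mx b *m Q^T in
  K1 *m Y = 1%:M -> K0 *m Y *m K0 = 0 -> K0 != 0 -> (n < r)%N.
Proof.
move=> K1 K0 K1Y K0YK0 K0_nz; rewrite ltnNge; apply/negP => le_rn.
have K1_unit : K1 \in unitmx by case/mulmx1_unit: K1Y.
have le_nr : (n <= r)%N.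
  rewrite -(mxrank_unit K1_unit); apply: leq_trans (mxrankM_maxl _ _) _.
  by apply: leq_trans (mxrankM_maxl _ _) _; exact: rank_leq_col.
have er : r = n by apply/eqP; rewrite eqn_leq le_rn le_nr.
subst r.
move: K1_unit; rewrite !unitmx_mul => /andP[/andP[P_unit _] QT_unit].
set X := Q^T *m Y *m P.
have : b = 0.
  apply: (@diag_pencil_nil n a b X).
    apply: (can_inj (mulKmx P_unit)); rewrite mulmx1.
    by rewrite /X !mulmxA -/K1 K1Y mul1mx.
  apply: (can_inj (mulmxK QT_unit)); apply: (can_inj (mulKmx P_unit)).
  by rewrite mul0mx mulmx0 -K0YK0 /K0 /X !mulmxA.
by move=> b0; move: K0_nz; rewrite /K0 b0 raddf0 mulmx0 mul0mx eqxx.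
Qed.

Lemma tensor_rank_pencil_bound m n (U : 'M[F]_(m * (n * n)))
    (a1 a0 : 'I_m) (Y : 'M[F]_(n * n)) :
  slice a1 U *m Y = 1%:M -> slice a0 U *m Y *m slice a0 U = 0 -> slice a0 U != 0 ->
  forall r (A : 'I_r -> 'M[F]_m) (B D : 'I_r -> 'M[F]_n),
  U = \sum_(j < r) A j *t (B j *t D j) -> (n * n < r)%N.
Proof.
move=> K1Y K0YK0 K0_nz r A B D U_eq.
move: K1Y K0YK0 K0_nz; rewrite U_eq !slice_sum.
exact: pencil_rank_bound.
Qed.

End Pencil.

Ltac case_ord2 := case=> [[|[|?]] ?]; last by [].
Ltac case_ord4 := case=> [[|[|[|[|?]]]] ?]; last by [].
Ltac simp_01 := rewrite ?(mul0r, mulr0, mul1r, mulr1, addr0, add0r, mulr1n, mulr0n).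
Ltac mx4_entries :=
  apply/matrixP; case_ord4; case_ord4;
  rewrite !mxE /= ?big_ord_recr ?big_ord0 /= ?mxE /= ?big_ord_recr ?big_ord0 /= ?mxE /=;
  simp_01.

Section U5.
Variable R : realType.
Local Notation C := R[i].

Lemma ket0bra0E : ket0bra0 R = delta_mx 0 0.
Proof. by apply/matrixP; case_ord2; case_ord2; rewrite !mxE. Qed.

Lemma ket1bra1E : ket1bra1 R = delta_mx 1 1.
Proof. by apply/matrixP; case_ord2; case_ord2; rewrite !mxE. Qed.

(* The permutation matrix |b,c> |-> |c xor 1, b> of the |1><1| block. *)
Definition blockM : 'M[C]_(2 * 2) := \matrix_(k, l)
  (((k == 0 :> nat) && (l == 1 :> nat)) || ((k == 1 :> nat) && (l == 3 :> nat)) ||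
   ((k == 2 :> nat) && (l == 0 :> nat)) || ((k == 3 :> nat) && (l == 2 :> nat)))%:R.

(* The rank-one matrix vec(I) vec(I)^T, the realignment of I (x) I. *)
Definition vecI_vecIT : 'M[C]_(2 * 2) := \matrix_(k, l)
  (((k == 0 :> nat) || (k == 3 :> nat)) && ((l == 0 :> nat) || (l == 3 :> nat)))%:R.

Lemma blockME : (sigma1 R *t I2 R) *m SWAP R = blockM.
Proof. by mx4_entries. Qed.

Lemma blockM_decomp : blockM =
  delta_mx 0 0 *t delta_mx 0 1 + delta_mx 0 1 *t delta_mx 1 1
  + delta_mx 1 0 *t delta_mx 0 0 + delta_mx 1 1 *t delta_mx 1 0.
Proof. by mx4_entries. Qed.

Lemma U5_blocks :
  U5 R = ket0bra0 R *t (I2 R *t I2 R) + ket1bra1 R *t ((sigma1 R *t I2 R) *m SWAP R).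
Proof.
rewrite /U5 /CNOT /Fredkin tensmxDl castmxD !tensmxA ket0bra0E ket1bra1E.
rewrite controlled_mul ?mul_delta_mx ?mul_delta_mx_0 //.
by rewrite /I2 tensmx_mul !mulmx1.
Qed.

Definition decompA (j : 'I_5) : 'M[C]_2 :=
  nth 0 [:: delta_mx 0 0; delta_mx 1 1; delta_mx 1 1; delta_mx 1 1; delta_mx 1 1] j.
Definition decompB (j : 'I_5) : 'M[C]_2 :=
  nth 0 [:: 1%:M; delta_mx 0 0; delta_mx 0 1; delta_mx 1 0; delta_mx 1 1] j.
Definition decompD (j : 'I_5) : 'M[C]_2 :=
  nth 0 [:: 1%:M; delta_mx 0 1; delta_mx 1 1; delta_mx 0 0; delta_mx 1 0] j.

Lemma U5_decomp : U5 R = \sum_(j < 5) decompA j *t (decompB j *t decompD j).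
Proof.
rewrite U5_blocks blockME blockM_decomp ket0bra0E ket1bra1E /I2.
by rewrite !big_ord_recr big_ord0 /= add0r !tensmxDr !addrA.
Qed.

Lemma slice1_U5 : slice ord_max (U5 R) = blockM.
Proof. by rewrite U5_blocks blockME; mx4_entries. Qed.

Lemma slice0_U5 : slice ord0 (U5 R) = vecI_vecIT.
Proof. by rewrite U5_blocks blockME; mx4_entries. Qed.

Lemma blockM_orthogonal : blockM *m blockM^T = 1%:M.
Proof. by mx4_entries. Qed.

Lemma vecI_vecIT_nil : vecI_vecIT *m blockM^T *m vecI_vecIT = 0.
Proof. by mx4_entries. Qed.

Lemma vecI_vecIT_neq0 : vecI_vecIT != 0.
Proof. by apply/negP => /eqP/matrixP/(_ 0 0); rewrite !mxE /= => /eqP; rewrite oner_eq0. Qed.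

Lemma U5_rank_ge5 r : has_sr_decomp (U5 R) r -> (5 <= r)%N.
Proof.
case=> A [B [D U5E]].
apply: (@tensor_rank_pencil_bound _ 2 2 (U5 R) ord_max ord0 blockM^T _ _ _ r A B D U5E).
- by rewrite slice1_U5 blockM_orthogonal.
- by rewrite slice0_U5 vecI_vecIT_nil.
- by rewrite slice0_U5 vecI_vecIT_neq0.
Qed.

End U5.

Theorem mainTheorem15 (R : realType) :
  schmidt_rank_is (U5 R) 5
  /\ U5 R = ket0bra0 R *t (I2 R *t I2 R) + ket1bra1 R *t ((sigma1 R *t I2 R) *m SWAP R).
Proof.
split; last exact: U5_blocks.
split; last exact: U5_rank_ge5.
by exists (decompA R), (decompB R), (decompD R); exact: U5_decomp.
Qed.
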